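(* Let $A>0$ and let $k_{\min},k_{\max},\mu_{\min},\mu_{\max}\in C^0([0,A];\mathbb{R}_{\ge 0})$ be Lipschitz functions such that $$k_{\min}(a)\le k_{\max}(a),\qquad \mu_{\min}(a)\le \mu_{\max}(a)\qquad \forall a\in[0,A],$$ and $$\int_0^A k_{\min}(a)\,e^{-\int_0^a \mu_{\max}(s)\,ds}\,da>1 .$$ Let $\zeta_{\min}$ and $\zeta_{\max}$ be the unique solutions of $$\int_0^A k_{\min}(a)e^{-\zeta_{\min} a-\int_0^a \mu_{\max}(s)\,ds}\,da=1,\qquad \int_0^A k_{\max}(a)e^{-\zeta_{\max} a-\int_0^a \mu_{\min}(s)\,ds}\,da=1,$$ so that $\zeta_{\min}\le\zeta_{\max}$. Let $G>0$ be large enough that $\|f\|_\infty+\sup_{a\neq s}\frac{|f(a)-f(s)|}{|a-s|}\le G$ for each $f\in\{k_{\min},k_{\max},\mu_{\min},\mu_{\max}\}$. Define $$H_G:=\Big\{f\in C^0([0,A];\mathbb{R}_{\ge0}):\ \|f\|_\infty+\sup_{a,s\in[0,A],\,a\ne s}\tfrac{|f(a)-f(s)|}{|a-s|}\le G\Big\},$$ $$S:=\{(k,\mu)\in H_G^2:\ k_{\min}(a)\le k(a)\le k_{\max}(a),\ \mu_{\min}(a)\le\mu(a)\le\mu_{\max}(a)\ \forall a\in[0,A]\}.$$ For $(k,\mu)\in S$ let $P(k,\mu)=\zeta$, where $\zeta>0$ is the unique solution of $\int_0^A k(a)e^{-\zeta a-\int_0^a\mu(s)\,ds}\,da=1$.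 Then $P$ maps $S$ into $[\zeta_{\min},\zeta_{\max}]$ and is Lipschitz continuous with respect to the sup norm: for all $(k,\mu),(\tilde k,\tilde\mu)\in S$, $$|P(\tilde k,\tilde\mu)-P(k,\mu)|\le L\,\|\tilde k-k\|_\infty+L\,\|k_{\max}\|_\infty\,A\,\|\tilde\mu-\mu\|_\infty,$$ where, with $I(a):=e^{-\int_0^a\mu_{\max}(s)\,ds}$, $$L=\frac{A\,\bigl(2A\|k_{\max}\|_\infty\bigr)^{2A\|k_{\max}\|_\infty-1}}{\left(\int_0^A a\,k_{\min}(a)I(a)\,da\right)\ln\!\left(\int_0^A k_{\min}(a)I(a)\,da\right)}.$$
   Context: $\|f\|_\infty=\sup_{a\in[0,A]}|f(a)|$. $C^0([0,A];\mathbb{R}_{\ge0})$ denotes continuous nonnegative functions on $[0,A]$. $P$ is the Lotka–Sharpe map assigning to a fertility profile $k$ and mortality profile $\mu$ the intrinsic growth rate $\zeta$. *)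

From Stdlib Require Import Reals.
From Coquelicot Require Import Coquelicot.
Open Scope R_scope.

Definition supnorm (A : R) (f : R -> R) : R :=
  real (Lub_Rbar (fun y => exists a, 0 <= a <= A /\ y = Rabs (f a))).

Definition lipconst (A : R) (f : R -> R) : R :=
  real (Lub_Rbar (fun y => exists a s, 0 <= a <= A /\ 0 <= s <= A /\ a <> s /\
                          y = Rabs (f a - f s) / Rabs (a - s))).

Definition cont_on (A : R) (f : R -> R) : Prop :=
  forall a, 0 <= a <= A ->
    filterlim f (within (fun x => 0 <= x <= A) (locally a)) (locally (f a)).

Definition nonneg_on (A : R) (f : R -> R) : Prop :=
  forall a, 0 <= a <= A -> 0 <= f a.

Definition lipschitz_on (A : R) (f : R -> R) : Prop :=
  exists K, forall a s, 0 <= a <= A -> 0 <= s <= A -> Rabs (f a - f s) <= K * Rabs (a - s).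

Definition C0nonneg_lip (A : R) (f : R -> R) : Prop :=
  cont_on A f /\ nonneg_on A f /\ lipschitz_on A f.

Definition H_G (A G : R) (f : R -> R) : Prop :=
  C0nonneg_lip A f /\ supnorm A f + lipconst A f <= G.

Definition LS_eq (A : R) (k mu : R -> R) (z : R) : Prop :=
  RInt (fun a => k a * exp (- z * a - RInt mu 0 a)) 0 A = 1.

Definition inS (A G : R) (kmin kmax mumin mumax k mu : R -> R) : Prop :=
  H_G A G k /\ H_G A G mu /\
  (forall a, 0 <= a <= A -> kmin a <= k a <= kmax a) /\
  (forall a, 0 <= a <= A -> mumin a <= mu a <= mumax a).

Definition Lconst (A : R) (kmin kmax mumax : R -> R) : R :=
  let I := fun a => exp (- RInt mumax 0 a) in
  let B := 2 * A * supnorm A kmax in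
  A * Rpower B (B - 1) /
  (RInt (fun a => a * kmin a * I a) 0 A * ln (RInt (fun a => kmin a * I a) 0 A)).

From Stdlib Require Import Reals Lra.
From Coquelicot Require Import Coquelicot.
Open Scope R_scope.

(** Write F(k, mu, z) = int_0^A k(a) exp(-z a - int_0^a mu) da.  F is nonincreasing in z,
    nondecreasing in k and nonincreasing in mu; with the intermediate value theorem this gives a
    root for every (k, mu) in S, squeezed between zmin and zmax.  Since exp t >= 1 + t,
    F(z) - F(z') >= (z' - z) int_0^A a k(a) exp(-z' a - int_0^a mu) da for z <= z', and this first
    moment is at least exp(-zmax A) D0 with D0 = int_0^A a kmin(a) I(a) da > 0.  For two roots
    z <= z' of (k, mu) and (k', mu') this yields
    (z' - z) exp(-zmax A) D0 <= F(k', mu', z) - F(k, mu, z)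
                              <= A (‖k' - k‖ + ‖kmax‖ A ‖mu' - mu‖).
    Finally zmax <= ‖kmax‖ and ln R0 <= R0 - 1 <= A ‖kmax‖ (R0 = int_0^A kmin I) bound
    exp(zmax A) ln R0 by (2 A ‖kmax‖)^(2 A ‖kmax‖ - 1). *)

Lemma exp_le_compat x y : x <= y -> exp x <= exp y.
Proof.
  intros [Hlt | ->]; [now left; apply exp_increasing | apply Rle_refl].
Qed.

Lemma exp_opp_le_1 x : 0 <= x -> exp (- x) <= 1.
Proof. intros; rewrite <- exp_0; apply exp_le_compat; lra. Qed.

Lemma exp_opp_sub_le x y : 0 <= x <= y -> 0 <= exp (- x) - exp (- y) <= y - x.
Proof.
  intros [Hx Hxy].
  assert (Hsplit : exp (- y) = exp (- x) * exp (- (y - x)))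
    by (rewrite <- exp_plus; f_equal; ring).
  pose proof (exp_ineq1_le (- (y - x))).
  pose proof (exp_opp_le_1 (y - x) ltac:(lra)).
  pose proof (exp_opp_le_1 x Hx).
  pose proof (exp_pos (- x)).
  rewrite Hsplit; split; nra.
Qed.

Lemma Rabs_exp_opp_sub_le x y : 0 <= x -> 0 <= y ->
  Rabs (exp (- x) - exp (- y)) <= Rabs (x - y).
Proof.
  intros Hx Hy; destruct (Rle_lt_dec x y) as [Hxy | Hyx].
  - pose proof (exp_opp_sub_le x y ltac:(lra)).
    rewrite Rabs_right, Rabs_left1 by lra; lra.
  - pose proof (exp_opp_sub_le y x ltac:(lra)).
    rewrite Rabs_left1, Rabs_right by lra; lra.
Qed.

Lemma lipschitz_continuous (f : R -> R) (K : R) :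
  (forall x y, Rabs (f x - f y) <= K * Rabs (x - y)) -> forall x, continuous f x.
Proof.
  intros Hf x.
  assert (HK : 0 <= K).
  { specialize (Hf 1 0); rewrite Rminus_0_r, Rabs_R1 in Hf.
    pose proof (Rabs_pos (f 1 - f 0)); lra. }
  apply continuity_pt_filterlim; intros eps Heps.
  exists (eps / (K + 1)); split; [apply Rdiv_lt_0_compat; lra|].
  intros y [_ Hy]; simpl in Hy; unfold R_dist in *.
  assert (Heps' : (K + 1) * (eps / (K + 1)) = eps) by (field; lra).
  pose proof (Rabs_pos (y - x)).
  apply Rle_lt_trans with (K * Rabs (y - x)); [apply Hf | nra].
Qed.

Definition clamp (A x : R) : R := Rmax 0 (Rmin A x).

Lemma clamp_in A x : 0 <= A -> 0 <= clamp A x <= A.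
Proof. intros; unfold clamp, Rmax, Rmin; repeat destruct Rle_dec; lra. Qed.

Lemma clamp_id A x : 0 <= x <= A -> clamp A x = x.
Proof. intros; unfold clamp, Rmax, Rmin; repeat destruct Rle_dec; lra. Qed.

Lemma Rabs_clamp_sub_le A x y : 0 <= A -> Rabs (clamp A x - clamp A y) <= Rabs (x - y).
Proof.
  intros; unfold clamp, Rmax, Rmin; repeat destruct Rle_dec;
    unfold Rabs; repeat destruct Rcase_abs; lra.
Qed.

(* Integrability on [0, A] is obtained from a continuous extension to R; a Lipschitz function
   extends by precomposing with the projection [clamp] onto [0, A]. *)
Definition has_cont_ext (A : R) (f : R -> R) : Prop :=
  exists g : R -> R, (forall x, continuous g x) /\ forall x, 0 <= x <= A -> g x = f x.

Lemma has_cont_ext_lipschitz A f : 0 <= A -> lipschitz_on A f -> has_cont_ext A f.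
Proof.
  intros HA [K HK]; exists (fun x => f (clamp A x)); split.
  - apply lipschitz_continuous with (Rabs K); intros x y.
    eapply Rle_trans; [apply HK; apply clamp_in; lra|].
    eapply Rle_trans; [apply Rmult_le_compat_r; [apply Rabs_pos | apply RRle_abs]|].
    apply Rmult_le_compat_l; [apply Rabs_pos | now apply Rabs_clamp_sub_le].
  - intros; now rewrite clamp_id.
Qed.

Lemma has_cont_ext_const A c : has_cont_ext A (fun _ => c).
Proof. exists (fun _ => c); split; auto using continuous_const. Qed.

Lemma has_cont_ext_id A : has_cont_ext A (fun x => x).
Proof. exists (fun x => x); split; auto using continuous_id. Qed.

Lemma has_cont_ext_plus A f g :
  has_cont_ext A f -> has_cont_ext A g -> has_cont_ext A (fun x => f x + g x).
Proof.
  intros [f' [Hf Ef]] [g' [Hg Eg]]; exists (fun x => f' x + g' x); split.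
  - intros x; now apply (continuous_plus f' g').
  - intros x Hx; now rewrite Ef, Eg.
Qed.

Lemma has_cont_ext_opp A f : has_cont_ext A f -> has_cont_ext A (fun x => - f x).
Proof.
  intros [f' [Hf Ef]]; exists (fun x => - f' x); split.
  - intros x; now apply (continuous_opp f').
  - intros x Hx; now rewrite Ef.
Qed.

Lemma has_cont_ext_minus A f g :
  has_cont_ext A f -> has_cont_ext A g -> has_cont_ext A (fun x => f x - g x).
Proof. intros; now apply has_cont_ext_plus, has_cont_ext_opp. Qed.

Lemma has_cont_ext_mult A f g :
  has_cont_ext A f -> has_cont_ext A g -> has_cont_ext A (fun x => f x * g x).
Proof.
  intros [f' [Hf Ef]] [g' [Hg Eg]]; exists (fun x => f' x * g' x); split.
  - intros x; now apply (continuous_mult f' g').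
  - intros x Hx; now rewrite Ef, Eg.
Qed.

Lemma has_cont_ext_exp A f : has_cont_ext A f -> has_cont_ext A (fun x => exp (f x)).
Proof.
  intros [f' [Hf Ef]]; exists (fun x => exp (f' x)); split.
  - intros x; now apply continuous_exp_comp.
  - intros x Hx; now rewrite Ef.
Qed.

Lemma between_in_interval A a b x : 0 <= a <= A -> 0 <= b <= A ->
  Rmin a b <= x <= Rmax a b -> 0 <= x <= A.
Proof. intros; unfold Rmin, Rmax in *; destruct Rle_dec; lra. Qed.

Lemma has_cont_ext_ex_RInt A f a b :
  has_cont_ext A f -> 0 <= a <= A -> 0 <= b <= A -> ex_RInt f a b.
Proof.
  intros [f' [Hf Ef]] Ha Hb.
  apply ex_RInt_ext with f'.
  - intros x Hx; apply Ef, (between_in_interval A a b); lra.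
  - apply (ex_RInt_continuous (V := R_CompleteNormedModule)); auto.
Qed.

Lemma has_cont_ext_RInt A f : 0 <= A -> has_cont_ext A f -> has_cont_ext A (fun x => RInt f 0 x).
Proof.
  intros HA [f' [Hf Ef]]; exists (fun x => RInt f' 0 x); split.
  - intros x; apply (continuous_RInt_1 (V := R_NormedModule) f' 0).
    apply filter_forall; intros y.
    apply (RInt_correct (V := R_CompleteNormedModule)).
    apply (ex_RInt_continuous (V := R_CompleteNormedModule)); auto.
  - intros x Hx; apply RInt_ext; intros y Hy; apply Ef, (between_in_interval A 0 x); lra.
Qed.

#[local] Hint Resolve has_cont_ext_const has_cont_ext_id has_cont_ext_plus has_cont_ext_opp
  has_cont_ext_minus has_cont_ext_mult has_cont_ext_exp has_cont_ext_RInt : cont_ext.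

Lemma RInt_le_on A (f g : R -> R) b : 0 <= b <= A -> has_cont_ext A f -> has_cont_ext A g ->
  (forall x, 0 <= x <= A -> f x <= g x) -> RInt f 0 b <= RInt g 0 b.
Proof.
  intros Hb Hf Hg H; apply RInt_le; [lra | | | intros; apply H; lra];
    apply has_cont_ext_ex_RInt with A; auto; lra.
Qed.

Lemma RInt_Rminus (f g : R -> R) a b : ex_RInt f a b -> ex_RInt g a b ->
  RInt (fun x => f x - g x) a b = RInt f a b - RInt g a b.
Proof. exact (RInt_minus (V := R_CompleteNormedModule) f g a b). Qed.

Lemma RInt_Rmult_l (f : R -> R) c a b : ex_RInt f a b ->
  RInt (fun x => c * f x) a b = c * RInt f a b.
Proof. exact (RInt_scal (V := R_CompleteNormedModule) f a b c). Qed.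

Lemma RInt_Rconst c a b : RInt (fun _ => c) a b = (b - a) * c.
Proof. exact (RInt_const (V := R_CompleteNormedModule) a b c). Qed.

Lemma RInt_RChasles (f : R -> R) a b c : ex_RInt f a b -> ex_RInt f b c ->
  RInt f a b + RInt f b c = RInt f a c.
Proof. exact (RInt_Chasles (V := R_CompleteNormedModule) f a b c). Qed.

Lemma RInt_ge0_on A (f : R -> R) b : 0 <= b <= A -> has_cont_ext A f ->
  (forall x, 0 <= x <= A -> 0 <= f x) -> 0 <= RInt f 0 b.
Proof.
  (* [RInt] lands in a normed module: [ring] needs the equation stated at type [R]. *)
  intros Hb Hf H; assert (H0 : RInt (fun _ => 0) 0 b = 0 :> R) by (rewrite RInt_Rconst; ring).
  rewrite <- H0 at 1; apply RInt_le_on with A; auto with cont_ext.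
Qed.

Lemma RInt_le_const_on A (f : R -> R) M : 0 <= A -> has_cont_ext A f ->
  (forall x, 0 <= x <= A -> f x <= M) -> RInt f 0 A <= A * M.
Proof.
  intros HA Hf H; assert (E : RInt (fun _ => M) 0 A = A * M :> R)
    by (rewrite RInt_Rconst; ring).
  rewrite <- E; apply RInt_le_on with A; auto with cont_ext; lra.
Qed.

Lemma Rabs_RInt_le_const_on A (f : R -> R) M b : 0 <= b <= A -> has_cont_ext A f ->
  (forall x, 0 <= x <= A -> Rabs (f x) <= M) -> Rabs (RInt f 0 b) <= b * M.
Proof.
  intros Hb Hf H; rewrite <- (Rminus_0_r b) at 2.
  apply abs_RInt_le_const; [lra | apply has_cont_ext_ex_RInt with A; auto; lra |].
  intros; apply H; lra.
Qed.

Lemma lipschitz_on_bounded A f : 0 <= A -> lipschitz_on A f ->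
  exists M, forall a, 0 <= a <= A -> Rabs (f a) <= M.
Proof.
  intros HA [K HK]; exists (Rabs (f 0) + Rabs K * A); intros a Ha.
  specialize (HK a 0 Ha ltac:(lra)); rewrite Rminus_0_r, (Rabs_right a) in HK by lra.
  assert (K * a <= Rabs K * A) by (pose proof (RRle_abs K); pose proof (Rabs_pos K); nra).
  pose proof (Rabs_triang_inv (f a) (f 0)); lra.
Qed.

Lemma Rabs_le_supnorm A f a : 0 <= A -> lipschitz_on A f -> 0 <= a <= A ->
  Rabs (f a) <= supnorm A f.
Proof.
  intros HA Hf Ha; destruct (lipschitz_on_bounded A f HA Hf) as [M HM].
  unfold supnorm.
  destruct (Lub_Rbar_correct (fun y => exists a, 0 <= a <= A /\ y = Rabs (f a))) as [Hub Hlub].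
  specialize (Hub (Rabs (f a)) (ex_intro _ a (conj Ha eq_refl))).
  assert (Hle : Rbar_le (Lub_Rbar (fun y => exists a, 0 <= a <= A /\ y = Rabs (f a))) M)
    by (apply Hlub; intros y [b [Hb ->]]; now apply HM).
  destruct Lub_Rbar; simpl in *; tauto.
Qed.

Lemma lipschitz_on_minus A f g : lipschitz_on A f -> lipschitz_on A g ->
  lipschitz_on A (fun x => f x - g x).
Proof.
  intros [K1 H1] [K2 H2]; exists (Rabs K1 + Rabs K2); intros a s Ha Hs.
  specialize (H1 a s Ha Hs); specialize (H2 a s Ha Hs).
  assert (K1 * Rabs (a - s) <= Rabs K1 * Rabs (a - s))
    by (apply Rmult_le_compat_r; auto using Rabs_pos, RRle_abs).
  assert (K2 * Rabs (a - s) <= Rabs K2 * Rabs (a - s))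
    by (apply Rmult_le_compat_r; auto using Rabs_pos, RRle_abs).
  replace (f a - g a - (f s - g s)) with ((f a - f s) - (g a - g s)) by ring.
  eapply Rle_trans; [apply Rabs_triang | rewrite Rabs_Ropp; lra].
Qed.

Lemma RInt_exp_mult_opp z b : 0 < z -> RInt (fun a => exp (- z * a)) 0 b = (1 - exp (- z * b)) / z.
Proof.
  intros Hz.
  assert (H : is_RInt (fun a => exp (- z * a)) 0 b
                (minus (- exp (- z * b) / z) (- exp (- z * 0) / z))).
  { apply (is_RInt_derive (V := R_CompleteNormedModule) (fun x => - exp (- z * x) / z)).
    - intros x _; auto_derive; [auto | field; lra].
    - intros x _; apply continuous_exp_comp.
      apply (continuous_mult (fun _ => - z) (fun x => x));
        auto using continuous_const, continuous_id. }
  rewrite (is_RInt_unique _ _ _ _ H); unfold minus, plus, opp; simpl.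
  rewrite Rmult_0_r, exp_0; field; lra.
Qed.

Lemma RInt_id_mult_pos A f K : 0 < A -> has_cont_ext A f ->
  (forall x, 0 <= x <= A -> 0 <= f x <= K) -> 1 < RInt f 0 A ->
  0 < RInt (fun a => a * f a) 0 A.
Proof.
  intros HA Hf HfK H1.
  assert (HK : 0 <= K) by (destruct (HfK 0); lra).
  (* int_0^t f <= t K < 1 < int_0^A f, so f keeps positive mass on [t, A], where a >= t. *)
  set (t := Rmin A (/ (K + 1))).
  assert (Ht : 0 < t <= A).
  { split; [apply Rmin_glb_lt; [lra | apply Rinv_0_lt_compat; lra] | apply Rmin_l]. }
  assert (HtK : t * K < 1).
  { assert (Ht1 : t * (K + 1) <= / (K + 1) * (K + 1))
      by (apply Rmult_le_compat_r; [lra | apply Rmin_r]).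
    rewrite Rinv_l in Ht1 by lra; lra. }
  assert (Hex : forall g, has_cont_ext A g ->
            forall u v, 0 <= u <= A -> 0 <= v <= A -> ex_RInt g u v)
    by (intros; apply has_cont_ext_ex_RInt with A; auto).
  assert (Hhead : RInt f 0 t <= t * K).
  { replace (t * K) with ((t - 0) * K) by ring; rewrite <- RInt_Rconst.
    apply RInt_le_on with A; auto with cont_ext; [lra | intros; apply HfK; lra]. }
  assert (Htail : t * RInt f t A <= RInt (fun a => a * f a) t A).
  { rewrite <- RInt_Rmult_l by (apply Hex; auto; lra).
    apply RInt_le; [lra | apply Hex; auto with cont_ext; lra | apply Hex; auto with cont_ext; lra |].
    intros x Hx; apply Rmult_le_compat_r; [apply HfK |]; lra. }
  assert (Hsplit : RInt f 0 t + RInt f t A = RInt f 0 A)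
    by (apply RInt_RChasles; apply Hex; auto; lra).
  assert (Hhead' : 0 <= RInt (fun a => a * f a) 0 t).
  { apply RInt_ge0_on with A; auto with cont_ext; [lra |].
    intros x Hx; apply Rmult_le_pos; [lra | apply HfK; auto]. }
  rewrite <- (RInt_RChasles _ 0 t A) by (apply Hex; auto with cont_ext; lra).
  assert (0 < t * RInt f t A) by (apply Rmult_lt_0_compat; lra).
  lra.
Qed.

Definition profile (A : R) (f : R -> R) : Prop := has_cont_ext A f /\ nonneg_on A f.

Lemma profile_C0nonneg_lip A f : 0 <= A -> C0nonneg_lip A f -> profile A f.
Proof. intros HA [_ [Hf Hlip]]; split; [now apply has_cont_ext_lipschitz | exact Hf]. Qed.

Section LotkaSharpe.

Variable A : R.
Hypothesis hA : 0 < A.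

Let hA0 : 0 <= A.
Proof. lra. Qed.

Definition LS_integrand (k mu : R -> R) (z a : R) : R := k a * exp (- z * a - RInt mu 0 a).

Definition LS_fun (k mu : R -> R) (z : R) : R := RInt (LS_integrand k mu z) 0 A.

Definition LS_moment (k mu : R -> R) (z : R) : R := RInt (fun a => a * LS_integrand k mu z a) 0 A.

Lemma has_cont_ext_LS_integrand k mu z :
  has_cont_ext A k -> has_cont_ext A mu -> has_cont_ext A (LS_integrand k mu z).
Proof. intros; unfold LS_integrand; auto with cont_ext. Qed.

#[local] Hint Resolve hA0 has_cont_ext_LS_integrand : cont_ext.
#[local] Hint Extern 1 (_ <= _ <= _) => split; lra : cont_ext.
#[local] Hint Extern 2 (ex_RInt _ _ _) => apply has_cont_ext_ex_RInt with A : cont_ext.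

Lemma RInt_profile_ge0 mu a : profile A mu -> 0 <= a <= A -> 0 <= RInt mu 0 a.
Proof. intros [Hm Nm] Ha; apply RInt_ge0_on with A; auto. Qed.

Lemma LS_integrand_bounds k mu z a : profile A k -> profile A mu -> 0 <= z -> 0 <= a <= A ->
  0 <= LS_integrand k mu z a <= k a.
Proof.
  intros [_ Nk] Hmu Hz Ha; unfold LS_integrand.
  pose proof (RInt_profile_ge0 mu a Hmu Ha); pose proof (Nk a Ha).
  assert (exp (- z * a - RInt mu 0 a) <= 1).
  { replace (- z * a - RInt mu 0 a) with (- (z * a + RInt mu 0 a)) by ring.
    apply exp_opp_le_1; nra. }
  pose proof (exp_pos (- z * a - RInt mu 0 a)); nra.
Qed.

Lemma LS_fun_le_mono k1 mu1 k2 mu2 z :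
  profile A k1 -> profile A mu1 -> profile A k2 -> profile A mu2 ->
  (forall a, 0 <= a <= A -> k1 a <= k2 a) -> (forall a, 0 <= a <= A -> mu2 a <= mu1 a) ->
  LS_fun k1 mu1 z <= LS_fun k2 mu2 z.
Proof.
  intros [Ek1 Nk1] [Em1 _] [Ek2 _] [Em2 _] Hk Hmu.
  apply RInt_le_on with A; auto with cont_ext; intros a Ha.
  apply Rmult_le_compat; auto; [left; apply exp_pos |].
  apply exp_le_compat.
  assert (RInt mu2 0 a <= RInt mu1 0 a) by (apply RInt_le_on with A; auto).
  lra.
Qed.

Lemma LS_fun_sub_ge_moment k mu z1 z2 : profile A k -> has_cont_ext A mu -> z1 <= z2 ->
  (z2 - z1) * LS_moment k mu z2 <= LS_fun k mu z1 - LS_fun k mu z2.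
Proof.
  intros [Ek Nk] Em Hz; unfold LS_fun, LS_moment.
  rewrite <- RInt_Rmult_l, <- RInt_Rminus by auto with cont_ext.
  apply RInt_le_on with A; auto with cont_ext; intros a Ha; unfold LS_integrand.
  set (u := exp (- z2 * a - RInt mu 0 a)).
  assert (Hshift : exp (- z1 * a - RInt mu 0 a) = u * exp ((z2 - z1) * a))
    by (unfold u; rewrite <- exp_plus; f_equal; ring).
  rewrite Hshift.
  pose proof (exp_ineq1_le ((z2 - z1) * a)).
  assert (0 <= k a * u) by (apply Rmult_le_pos; [apply Nk; auto | left; apply exp_pos]).
  nra.
Qed.

Lemma LS_moment_ge0 k mu z : profile A k -> profile A mu -> 0 <= LS_moment k mu z.
Proof.
  intros Hk Hmu; apply RInt_ge0_on with A; [lra | destruct Hk, Hmu; auto with cont_ext |].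
  intros a Ha; apply Rmult_le_pos; [lra |].
  destruct Hk as [_ Nk]; unfold LS_integrand.
  apply Rmult_le_pos; [apply Nk; auto | left; apply exp_pos].
Qed.

Lemma LS_fun_antitone k mu z1 z2 : profile A k -> profile A mu -> z1 <= z2 ->
  LS_fun k mu z2 <= LS_fun k mu z1.
Proof.
  intros Hk Hmu Hz.
  pose proof (LS_fun_sub_ge_moment k mu z1 z2 Hk (proj1 Hmu) Hz).
  pose proof (LS_moment_ge0 k mu z2 Hk Hmu).
  nra.
Qed.

Lemma LS_moment_ge k mu kmin mumax z :
  profile A k -> profile A mu -> profile A kmin -> profile A mumax ->
  (forall a, 0 <= a <= A -> kmin a <= k a) -> (forall a, 0 <= a <= A -> mu a <= mumax a) ->
  0 <= z -> exp (- z * A) * LS_moment kmin mumax 0 <= LS_moment k mu z.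
Proof.
  intros [Ek Nk] [Em Nm] [Ekm Nkm] [Emm Nmm] Hk Hmu Hz; unfold LS_moment.
  rewrite <- RInt_Rmult_l by auto with cont_ext.
  apply RInt_le_on with A; auto with cont_ext; intros a Ha; unfold LS_integrand.
  assert (Hweight : exp (- z * A) * exp (- 0 * a - RInt mumax 0 a) <= exp (- z * a - RInt mu 0 a)).
  { rewrite <- exp_plus; apply exp_le_compat.
    assert (RInt mu 0 a <= RInt mumax 0 a) by (apply RInt_le_on with A; auto).
    nra. }
  replace (exp (- z * A) * (a * (kmin a * exp (- 0 * a - RInt mumax 0 a))))
    with (a * kmin a * (exp (- z * A) * exp (- 0 * a - RInt mumax 0 a))) by ring.
  replace (a * (k a * exp (- z * a - RInt mu 0 a)))
    with (a * k a * exp (- z * a - RInt mu 0 a)) by ring.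
  apply Rmult_le_compat; [| left; apply Rmult_lt_0_compat; apply exp_pos | | exact Hweight].
  - apply Rmult_le_pos; [lra | apply Nkm; auto].
  - apply Rmult_le_compat_l; [lra | auto].
Qed.

Lemma LS_fun_le_div k mu K z : profile A k -> profile A mu ->
  (forall a, 0 <= a <= A -> k a <= K) -> 0 < z -> LS_fun k mu z <= K / z.
Proof.
  intros [Ek Nk] Hmu HK Hz; pose proof Hmu as [Em _].
  assert (HK0 : 0 <= K) by (pose proof (Nk 0) ; pose proof (HK 0); lra).
  apply Rle_trans with (RInt (fun a => K * exp (- z * a)) 0 A).
  - apply RInt_le_on with A; auto with cont_ext.
    intros a Ha; unfold LS_integrand.
    apply Rmult_le_compat; [apply Nk; auto | left; apply exp_pos | auto |].
    apply exp_le_compat; pose proof (RInt_profile_ge0 mu a Hmu Ha); lra.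
  - rewrite RInt_Rmult_l, RInt_exp_mult_opp by auto with cont_ext.
    pose proof (exp_pos (- z * A)).
    unfold Rdiv; rewrite <- Rmult_assoc; apply Rmult_le_compat_r.
    + left; apply Rinv_0_lt_compat; lra.
    + nra.
Qed.

Lemma LS_fun_lipschitz k mu K z1 z2 : profile A k -> profile A mu ->
  (forall a, 0 <= a <= A -> k a <= K) -> 0 <= z1 -> 0 <= z2 ->
  Rabs (LS_fun k mu z1 - LS_fun k mu z2) <= A * (K * A * Rabs (z1 - z2)).
Proof.
  intros [Ek Nk] Hmu HK Hz1 Hz2; pose proof Hmu as [Em _]; unfold LS_fun.
  rewrite <- RInt_Rminus by auto with cont_ext.
  apply Rabs_RInt_le_const_on with A; auto with cont_ext.
  intros a Ha; unfold LS_integrand.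
  pose proof (RInt_profile_ge0 mu a Hmu Ha).
  replace (- z1 * a - RInt mu 0 a) with (- (z1 * a + RInt mu 0 a)) by ring.
  replace (- z2 * a - RInt mu 0 a) with (- (z2 * a + RInt mu 0 a)) by ring.
  rewrite <- Rmult_minus_distr_l, Rabs_mult, (Rabs_right (k a)) by (apply Rle_ge, Nk; auto).
  assert (Hexp := Rabs_exp_opp_sub_le (z1 * a + RInt mu 0 a) (z2 * a + RInt mu 0 a)
                    ltac:(nra) ltac:(nra)).
  replace (z1 * a + RInt mu 0 a - (z2 * a + RInt mu 0 a)) with ((z1 - z2) * a) in Hexp by ring.
  rewrite Rabs_mult, (Rabs_right a) in Hexp by lra.
  pose proof (Nk a Ha); pose proof (HK a Ha); pose proof (Rabs_pos (z1 - z2)).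
  pose proof (Rabs_pos (exp (- (z1 * a + RInt mu 0 a)) - exp (- (z2 * a + RInt mu 0 a)))).
  assert (0 <= K * Rabs (z1 - z2)) by nra.
  apply Rle_trans with (K * (Rabs (z1 - z2) * a)); [apply Rmult_le_compat; lra | nra].
Qed.

Lemma LS_root_exists k mu K : profile A k -> profile A mu ->
  (forall a, 0 <= a <= A -> k a <= K) -> 1 < LS_fun k mu 0 ->
  exists z, 0 < z /\ LS_fun k mu z = 1.
Proof.
  intros Hk Hmu HK H0.
  assert (HK0 : 0 <= K) by (pose proof (proj2 Hk 0); pose proof (HK 0); lra).
  set (g z := 1 - LS_fun k mu (Rabs z)).
  assert (Hg : continuity g).
  { intros x; apply continuity_pt_filterlim, lipschitz_continuous with (A * (K * A)); intros u v.
    unfold g; replace (1 - LS_fun k mu (Rabs u) - (1 - LS_fun k mu (Rabs v)))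
      with (LS_fun k mu (Rabs v) - LS_fun k mu (Rabs u)) by ring.
    eapply Rle_trans; [apply LS_fun_lipschitz; auto using Rabs_pos |].
    rewrite <- Rmult_assoc; apply Rmult_le_compat_l; [nra |].
    rewrite Rabs_minus_sym; apply Rabs_triang_inv2. }
  assert (Hg0 : g 0 < 0) by (unfold g; rewrite Rabs_R0; lra).
  assert (Hg1 : 0 < g (K + 1)).
  { unfold g; rewrite Rabs_right by lra.
    pose proof (LS_fun_le_div k mu K (K + 1) Hk Hmu HK ltac:(lra)).
    assert (K / (K + 1) = 1 - / (K + 1)) by (field; lra).
    pose proof (Rinv_0_lt_compat (K + 1) ltac:(lra)); lra. }
  destruct (IVT g 0 (K + 1) Hg ltac:(lra) Hg0 Hg1) as [z [Hz Hgz]].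
  unfold g in Hgz; rewrite Rabs_right in Hgz by lra.
  exists z; split; [| lra].
  destruct (Req_dec z 0) as [-> | Hz0]; lra.
Qed.

Lemma Rabs_LS_fun_sub_le k mu k' mu' K Sk Smu z :
  profile A k -> profile A mu -> profile A k' -> profile A mu' ->
  (forall a, 0 <= a <= A -> k a <= K) ->
  (forall a, 0 <= a <= A -> Rabs (k' a - k a) <= Sk) ->
  (forall a, 0 <= a <= A -> Rabs (mu' a - mu a) <= Smu) -> 0 <= z ->
  Rabs (LS_fun k' mu' z - LS_fun k mu z) <= A * (Sk + K * A * Smu).
Proof.
  intros [Ek Nk] Hmu [Ek' Nk'] Hmu' HK HSk HSmu Hz.
  pose proof Hmu as [Em _]; pose proof Hmu' as [Em' _].
  unfold LS_fun; rewrite <- RInt_Rminus by auto with cont_ext.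
  apply Rabs_RInt_le_const_on with A; auto with cont_ext.
  intros a Ha; unfold LS_integrand.
  assert (HSmu0 : 0 <= Smu)
    by (pose proof (HSmu 0 ltac:(lra)); pose proof (Rabs_pos (mu' 0 - mu 0)); lra).
  assert (HM : Rabs (RInt mu' 0 a - RInt mu 0 a) <= A * Smu).
  { rewrite <- RInt_Rminus by auto with cont_ext.
    eapply Rle_trans; [apply Rabs_RInt_le_const_on with A; auto with cont_ext | nra]. }
  pose proof (RInt_profile_ge0 mu a Hmu Ha); pose proof (RInt_profile_ge0 mu' a Hmu' Ha).
  assert (Hq := Rabs_exp_opp_sub_le (RInt mu' 0 a) (RInt mu 0 a) ltac:(lra) ltac:(lra)).
  set (p := exp (- z * a)); set (q := exp (- RInt mu 0 a)); set (q' := exp (- RInt mu' 0 a)).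
  fold q q' in Hq.
  assert (Hsplit : forall M, exp (- z * a - M) = p * exp (- M))
    by (intros; unfold p; rewrite <- exp_plus; f_equal; ring).
  rewrite !Hsplit; fold q q'.
  replace (k' a * (p * q') - k a * (p * q)) with (p * ((k' a - k a) * q' + k a * (q' - q))) by ring.
  assert (Hp : 0 < p <= 1)
    by (split; [apply exp_pos | unfold p; rewrite <- exp_0; apply exp_le_compat; nra]).
  assert (Hq' : 0 < q' <= 1) by (split; [apply exp_pos | apply exp_opp_le_1; lra]).
  pose proof (Nk a Ha); pose proof (HK a Ha); pose proof (HSk a Ha).
  rewrite Rabs_mult, (Rabs_right p) by lra.
  assert (Htri := Rabs_triang ((k' a - k a) * q') (k a * (q' - q))).
  rewrite !Rabs_mult, (Rabs_right q'), (Rabs_right (k a)) in Htri by lra.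
  pose proof (Rabs_pos ((k' a - k a) * q' + k a * (q' - q))).
  pose proof (Rabs_pos (k' a - k a)); pose proof (Rabs_pos (q' - q)).
  assert (Rabs (k' a - k a) * q' <= Sk) by nra.
  assert (k a * Rabs (q' - q) <= K * (A * Smu)) by (apply Rmult_le_compat; lra).
  nra.
Qed.

Lemma LS_root_le k1 mu1 k2 mu2 z1 z2 : profile A k2 -> has_cont_ext A mu2 ->
  LS_fun k1 mu1 z1 <= LS_fun k2 mu2 z1 -> 0 < LS_moment k2 mu2 z1 ->
  LS_fun k1 mu1 z1 = 1 -> LS_fun k2 mu2 z2 = 1 -> z1 <= z2.
Proof.
  intros Hk2 Hmu2 Hle Hmom H1 H2.
  destruct (Rle_lt_dec z1 z2) as [| Hlt]; [assumption | exfalso].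
  pose proof (LS_fun_sub_ge_moment k2 mu2 z2 z1 Hk2 Hmu2 ltac:(lra)).
  assert (0 < (z1 - z2) * LS_moment k2 mu2 z1) by (apply Rmult_lt_0_compat; lra).
  lra.
Qed.

End LotkaSharpe.

Lemma exp_mul_ln_le_Rpower r w x : 1 < r -> r <= x -> w <= x ->
  exp w * ln r <= Rpower (2 * x) (2 * x - 1).
Proof.
  intros Hr Hrx Hwx.
  assert (Hlnr : 0 < ln r <= x - 1).
  { split; [rewrite <- ln_1; apply ln_increasing; lra |].
    pose proof (exp_ineq1_le (ln r)); rewrite exp_ln in * by lra; lra. }
  assert (Hlnx : ln (x - 1) <= x - 2).
  { pose proof (exp_ineq1_le (ln (x - 1))); rewrite exp_ln in * by lra; lra. }
  assert (Hln2x : 1 - / (2 * x) <= ln (2 * x)).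
  { pose proof (exp_ineq1_le (ln (/ (2 * x)))).
    rewrite exp_ln, ln_Rinv in * by (try apply Rinv_0_lt_compat; lra); lra. }
  assert (Hexpo : 2 * x - 2 <= (2 * x - 1) * ln (2 * x)).
  { apply Rle_trans with ((2 * x - 1) * (1 - / (2 * x))); [| apply Rmult_le_compat_l; lra].
    replace ((2 * x - 1) * (1 - / (2 * x))) with (2 * x - 2 + / (2 * x)) by (field; lra).
    pose proof (Rinv_0_lt_compat (2 * x) ltac:(lra)); lra. }
  apply Rle_trans with (exp x * (x - 1)).
  - apply Rmult_le_compat; [left; apply exp_pos | lra | apply exp_le_compat | ]; lra.
  - rewrite <- (exp_ln (x - 1)) by lra; rewrite <- exp_plus; unfold Rpower.
    apply exp_le_compat; lra.
Qed.

Section Bounds.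

Variables (A K zmin zmax : R) (kmin kmax mumin mumax : R -> R).
Hypotheses (hA : 0 < A)
  (hkmin : profile A kmin) (hkmax : profile A kmax)
  (hmumin : profile A mumin) (hmumax : profile A mumax)
  (hk : forall a, 0 <= a <= A -> kmin a <= kmax a)
  (hmu : forall a, 0 <= a <= A -> mumin a <= mumax a)
  (hK : forall a, 0 <= a <= A -> kmax a <= K)
  (hR0 : 1 < LS_fun A kmin mumax 0)
  (hzmin : LS_fun A kmin mumax zmin = 1) (hzmax : LS_fun A kmax mumin zmax = 1).

Definition in_bounds (k mu : R -> R) : Prop :=
  profile A k /\ profile A mu /\
  (forall a, 0 <= a <= A -> kmin a <= k a <= kmax a) /\
  (forall a, 0 <= a <= A -> mumin a <= mu a <= mumax a).

Lemma in_bounds_max : in_bounds kmax mumin.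
Proof.
  unfold in_bounds; split; [auto | split; [auto | split]];
    intros a Ha; split; auto using Rle_refl.
Qed.

Lemma LS_moment_min_pos : 0 < LS_moment A kmin mumax 0.
Proof.
  apply RInt_id_mult_pos with K; auto.
  - destruct hkmin, hmumax; now apply has_cont_ext_LS_integrand.
  - intros a Ha; pose proof (LS_integrand_bounds A kmin mumax 0 a hkmin hmumax (Rle_refl 0) Ha).
    pose proof (hk a Ha); pose proof (hK a Ha); lra.
Qed.

Lemma zmin_pos : 0 < zmin.
Proof.
  destruct (Rlt_le_dec 0 zmin) as [| Hle]; [assumption | exfalso].
  pose proof (LS_fun_antitone A hA kmin mumax zmin 0 hkmin hmumax Hle); lra.
Qed.

Lemma LS_moment_pos_in_bounds k mu z : in_bounds k mu -> 0 <= z -> 0 < LS_moment A k mu z.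
Proof.
  intros (Hk & Hmu & Hkb & Hmub) Hz.
  eapply Rlt_le_trans; [| apply (LS_moment_ge A hA _ _ kmin mumax); auto].
  - apply Rmult_lt_0_compat; [apply exp_pos | apply LS_moment_min_pos].
  - intros a Ha; apply Hkb; auto.
  - intros a Ha; apply Hmub; auto.
Qed.

Lemma LS_root_in_bounds k mu z : in_bounds k mu -> LS_fun A k mu z = 1 -> zmin <= z <= zmax.
Proof.
  intros Hb Hz; pose proof Hb as (Hk & Hmu & Hkb & Hmub).
  assert (Hlow : zmin <= z).
  { apply (LS_root_le A hA kmin mumax k mu zmin z); auto.
    - now destruct Hmu.
    - apply LS_fun_le_mono; auto; intros a Ha; [apply Hkb | apply Hmub]; auto.
    - apply LS_moment_pos_in_bounds; auto; left; apply zmin_pos. }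
  split; [exact Hlow |].
  apply (LS_root_le A hA k mu kmax mumin z zmax); auto.
  - now destruct hmumin.
  - apply LS_fun_le_mono; auto; intros a Ha; [apply Hkb | apply Hmub]; auto.
  - apply LS_moment_pos_in_bounds; [apply in_bounds_max |].
    pose proof zmin_pos; lra.
Qed.

Lemma LS_root_exists_in_bounds k mu : in_bounds k mu -> exists z, 0 < z /\ LS_fun A k mu z = 1.
Proof.
  intros (Hk & Hmu & Hkb & Hmub).
  apply LS_root_exists with K; auto.
  - intros a Ha; pose proof (Hkb a Ha); pose proof (hK a Ha); lra.
  - eapply Rlt_le_trans; [exact hR0 |].
    apply LS_fun_le_mono; auto; intros a Ha; [apply Hkb | apply Hmub]; auto.
Qed.

Lemma zmax_le_K : zmax <= K.
Proof.
  assert (Hzmax : 0 < zmax).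
  { pose proof zmin_pos; pose proof (LS_root_in_bounds kmax mumin zmax in_bounds_max hzmax); lra. }
  pose proof (LS_fun_le_div A hA kmax mumin K zmax hkmax hmumin hK Hzmax) as Hdiv.
  rewrite hzmax in Hdiv.
  apply Rmult_le_reg_r with (/ zmax); [now apply Rinv_0_lt_compat |].
  rewrite Rinv_r by lra; exact Hdiv.
Qed.

Lemma LS_fun_min_le : LS_fun A kmin mumax 0 <= A * K.
Proof.
  apply RInt_le_const_on; [lra | destruct hkmin, hmumax; now apply has_cont_ext_LS_integrand |].
  intros a Ha; pose proof (LS_integrand_bounds A kmin mumax 0 a hkmin hmumax (Rle_refl 0) Ha).
  pose proof (hk a Ha); pose proof (hK a Ha); lra.
Qed.

Lemma LS_root_sub_le k mu k' mu' z z' Sk Smu :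
  in_bounds k mu -> in_bounds k' mu' -> LS_fun A k mu z = 1 -> LS_fun A k' mu' z' = 1 ->
  (forall a, 0 <= a <= A -> Rabs (k' a - k a) <= Sk) ->
  (forall a, 0 <= a <= A -> Rabs (mu' a - mu a) <= Smu) -> z <= z' ->
  (z' - z) * (exp (- zmax * A) * LS_moment A kmin mumax 0) <= A * (Sk + K * A * Smu).
Proof.
  intros Hb Hb' Hz Hz' HSk HSmu Hle.
  pose proof Hb as (Hk & Hmu & Hkb & _); pose proof Hb' as (Hk' & Hmu' & Hkb' & Hmub').
  destruct (LS_root_in_bounds k mu z Hb Hz) as [Hzmin _].
  destruct (LS_root_in_bounds k' mu' z' Hb' Hz') as [_ Hzmax'].
  pose proof zmin_pos.
  assert (Hmom : exp (- zmax * A) * LS_moment A kmin mumax 0 <= LS_moment A k' mu' z').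
  { eapply Rle_trans; [| apply (LS_moment_ge A hA _ _ kmin mumax); auto; try lra].
    - apply Rmult_le_compat_r; [left; apply LS_moment_min_pos | apply exp_le_compat; nra].
    - intros a Ha; apply Hkb'; auto.
    - intros a Ha; apply Hmub'; auto. }
  pose proof (LS_fun_sub_ge_moment A hA k' mu' z z' Hk' (proj1 Hmu') Hle) as Hgap.
  assert (HkK : forall a, 0 <= a <= A -> k a <= K)
    by (intros a Ha; pose proof (Hkb a Ha); pose proof (hK a Ha); lra).
  pose proof (Rabs_LS_fun_sub_le A hA k mu k' mu' K Sk Smu z
                Hk Hmu Hk' Hmu' HkK HSk HSmu ltac:(lra)) as Hdiff.
  pose proof (RRle_abs (LS_fun A k' mu' z - LS_fun A k mu z)).
  assert (0 <= z' - z) by lra.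
  nra.
Qed.

Lemma Rabs_LS_root_sub_le k mu k' mu' z z' Sk Smu :
  in_bounds k mu -> in_bounds k' mu' -> LS_fun A k mu z = 1 -> LS_fun A k' mu' z' = 1 ->
  (forall a, 0 <= a <= A -> Rabs (k' a - k a) <= Sk) ->
  (forall a, 0 <= a <= A -> Rabs (mu' a - mu a) <= Smu) ->
  Rabs (z' - z) * (exp (- zmax * A) * LS_moment A kmin mumax 0) <= A * (Sk + K * A * Smu).
Proof.
  intros Hb Hb' Hz Hz' HSk HSmu.
  destruct (Rle_lt_dec z z') as [Hle | Hlt].
  - rewrite Rabs_right by lra; now apply LS_root_sub_le with k mu k' mu'.
  - rewrite Rabs_left by lra; replace (- (z' - z)) with (z - z') by ring.
    apply LS_root_sub_le with k' mu' k mu; auto; [| | lra];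
      intros a Ha; rewrite Rabs_minus_sym; auto.
Qed.

Lemma LS_root_lipschitz k mu k' mu' z z' Sk Smu :
  in_bounds k mu -> in_bounds k' mu' -> LS_fun A k mu z = 1 -> LS_fun A k' mu' z' = 1 ->
  (forall a, 0 <= a <= A -> Rabs (k' a - k a) <= Sk) ->
  (forall a, 0 <= a <= A -> Rabs (mu' a - mu a) <= Smu) ->
  Rabs (z' - z) <= A * Rpower (2 * A * K) (2 * A * K - 1)
    / (LS_moment A kmin mumax 0 * ln (LS_fun A kmin mumax 0)) * (Sk + K * A * Smu).
Proof.
  intros Hb Hb' Hz Hz' HSk HSmu.
  pose proof zmax_le_K; pose proof LS_fun_min_le.
  set (D0 := LS_moment A kmin mumax 0); set (R0 := LS_fun A kmin mumax 0) in *.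
  set (P := Rpower (2 * A * K) (2 * A * K - 1)); set (C := Sk + K * A * Smu).
  pose proof (Rabs_LS_root_sub_le k mu k' mu' z z' Sk Smu Hb Hb' Hz Hz' HSk HSmu) as Hdist.
  fold D0 C in Hdist.
  assert (HD0 : 0 < D0) by apply LS_moment_min_pos.
  assert (Hl : 0 < ln R0) by (rewrite <- ln_1; apply ln_increasing; lra).
  assert (HP : exp (zmax * A) * ln R0 <= P).
  { unfold P; replace (2 * A * K) with (2 * (A * K)) by ring.
    apply exp_mul_ln_le_Rpower; [lra | lra | nra]. }
  assert (Hexp : exp (- zmax * A) * exp (zmax * A) = 1)
    by (rewrite <- exp_plus, <- exp_0; f_equal; ring).
  pose proof (exp_pos (zmax * A)); pose proof (Rabs_pos (z' - z)).
  assert (Hmul : Rabs (z' - z) * D0 <= A * C * exp (zmax * A)).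
  { rewrite <- (Rmult_1_r (Rabs (z' - z) * D0)), <- Hexp.
    replace (Rabs (z' - z) * D0 * (exp (- zmax * A) * exp (zmax * A)))
      with (Rabs (z' - z) * (exp (- zmax * A) * D0) * exp (zmax * A)) by ring.
    apply Rmult_le_compat_r; lra. }
  apply Rmult_le_reg_r with (D0 * ln R0); [now apply Rmult_lt_0_compat |].
  replace (A * P / (D0 * ln R0) * C * (D0 * ln R0)) with (A * C * P) by (field; lra).
  assert (0 <= A * C).
  { pose proof (Rabs_pos (z' - z)); pose proof (exp_pos (- zmax * A)); nra. }
  nra.
Qed.

End Bounds.

Lemma LS_fun_0 A k mu : LS_fun A k mu 0 = RInt (fun a => k a * exp (- RInt mu 0 a)) 0 A.
Proof. apply RInt_ext; intros a _; unfold LS_integrand; do 2 f_equal; ring. Qed.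

Lemma LS_moment_0 A k mu :
  LS_moment A k mu 0 = RInt (fun a => a * k a * exp (- RInt mu 0 a)) 0 A.
Proof.
  apply RInt_ext; intros a _; unfold LS_integrand; rewrite Rmult_assoc; do 3 f_equal; ring.
Qed.

Lemma inS_in_bounds A G kmin kmax mumin mumax k mu : 0 <= A ->
  inS A G kmin kmax mumin mumax k mu ->
  in_bounds A kmin kmax mumin mumax k mu /\ lipschitz_on A k /\ lipschitz_on A mu.
Proof.
  intros HA [[Hk _] [[Hmu _] [Hkb Hmub]]].
  split; [split; [| split; [| split]] | split]; auto using profile_C0nonneg_lip;
    [apply Hk | apply Hmu].
Qed.

Theorem theorem1 (A G zmin zmax : R) (kmin kmax mumin mumax : R -> R)
  (hA : 0 < A)
  (hkmin : C0nonneg_lip A kmin) (hkmax : C0nonneg_lip A kmax)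
  (hmumin : C0nonneg_lip A mumin) (hmumax : C0nonneg_lip A mumax)
  (hk : forall a, 0 <= a <= A -> kmin a <= kmax a)
  (hmu : forall a, 0 <= a <= A -> mumin a <= mumax a)
  (hR0 : RInt (fun a => kmin a * exp (- RInt mumax 0 a)) 0 A > 1)
  (hzmin : LS_eq A kmin mumax zmin)
  (hzmax : LS_eq A kmax mumin zmax)
  (hG : 0 < G)
  (hGkmin : supnorm A kmin + lipconst A kmin <= G)
  (hGkmax : supnorm A kmax + lipconst A kmax <= G)
  (hGmumin : supnorm A mumin + lipconst A mumin <= G)
  (hGmumax : supnorm A mumax + lipconst A mumax <= G) :
  (forall k mu, inS A G kmin kmax mumin mumax k mu ->
     exists z, 0 < z /\ LS_eq A k mu z) /\
  (forall k mu z, inS A G kmin kmax mumin mumax k mu -> LS_eq A k mu z ->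
     zmin <= z <= zmax) /\
  (forall k mu z k' mu' z',
     inS A G kmin kmax mumin mumax k mu -> LS_eq A k mu z ->
     inS A G kmin kmax mumin mumax k' mu' -> LS_eq A k' mu' z' ->
     Rabs (z' - z) <=
       Lconst A kmin kmax mumax * supnorm A (fun a => k' a - k a)
       + Lconst A kmin kmax mumax * supnorm A kmax * A
         * supnorm A (fun a => mu' a - mu a)).
Proof.
  assert (hA0 : 0 <= A) by lra.
  assert (hK : forall a, 0 <= a <= A -> kmax a <= supnorm A kmax)
    by (intros a Ha; eapply Rle_trans;
        [apply RRle_abs | apply Rabs_le_supnorm; [lra | apply hkmax | exact Ha]]).
  apply profile_C0nonneg_lip in hkmin, hkmax, hmumin, hmumax; auto.
  rewrite <- LS_fun_0 in hR0.
  change (LS_fun A kmin mumax zmin = 1) in hzmin; change (LS_fun A kmax mumin zmax = 1) in hzmax.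
  split; [| split].
  - intros k mu HS.
    apply (LS_root_exists_in_bounds A (supnorm A kmax) kmin kmax mumin mumax); auto.
    now apply inS_in_bounds with G.
  - intros k mu z HS Hz.
    apply (LS_root_in_bounds A (supnorm A kmax) zmin zmax kmin kmax mumin mumax) with k mu; auto.
    now apply inS_in_bounds with G.
  - intros k mu z k' mu' z' HS Hz HS' Hz'.
    destruct (inS_in_bounds A G kmin kmax mumin mumax k mu hA0 HS) as (Hb & Hk & Hmu).
    destruct (inS_in_bounds A G kmin kmax mumin mumax k' mu' hA0 HS') as (Hb' & Hk' & Hmu').
    unfold Lconst; cbv zeta; rewrite <- LS_moment_0, <- LS_fun_0.
    eapply Rle_trans;
      [apply (LS_root_lipschitz A (supnorm A kmax) zmin zmax kmin kmax mumin mumax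
                hA hkmin hkmax hmumin hmumax hk hmu hK hR0 hzmin hzmax k mu k' mu' z z'
                (supnorm A (fun a => k' a - k a)) (supnorm A (fun a => mu' a - mu a)))
      | right; ring]; auto.
    + intros a Ha; apply (Rabs_le_supnorm A (fun a => k' a - k a)); auto using lipschitz_on_minus.
    + intros a Ha; apply (Rabs_le_supnorm A (fun a => mu' a - mu a)); auto using lipschitz_on_minus.
Qed.
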